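(* Fix $\alpha\in(0,1)$ and let $\mathcal{D}_\alpha=\{d\in(0,\min\{(1-\alpha)\varphi_{\max},\psi_{\max}\}): \psi_\alpha^{-1}(d)<s_{\rm in}\}$, where $$\psi_\alpha^{-1}(d)=\varphi^{-1}\!\left(\frac{d}{1-\alpha}\right)+\frac{\psi^{-1}(d)}{\alpha\beta\gamma}.$$ Then $\mathcal D_\alpha$ is an interval (of the form $(0,\psi_\alpha(s_{\rm in}))$), $f_0^*(\alpha,d)=\big(s_{\rm in}-\psi_\alpha^{-1}(d)\big)\dfrac{\alpha\beta\gamma\, d}{\mu^{-1}(d)}>0$ on $\mathcal D_\alpha$, and $d\mapsto f_0^*(\alpha,d)$ is strictly log-concave on $\mathcal D_\alpha$.
   Context: All parameters $s_{\rm in},\gamma,\beta,\varphi_{\max},k_s,\rho_{\max},k_v,q_{\min},\mu_{\max}$ are strictly positive. $\varphi(s)=\frac{\varphi_{\max}s}{k_s+s}$, $\rho(v)=\frac{\rho_{\max}v}{k_v+v}$ on $[0,\infty)$, $\mu(q)=\mu_{\max}(1-q_{\min}/q)$ on $[q_{\min},\infty)$, with inverses $\varphi^{-1}:[0,\varphi_{\max})\to[0,\infty)$, $\mu^{-1}:[0,\mu_{\max})\to[q_{\min},\infty)$, $\rho^{-1}:[0,\rho_{\max})\to[0,\infty)$. $\psi_{\max}=\frac{\mu_{\max}\rho_{\max}}{\rho_{\max}+q_{\min}\mu_{\max}}$ and $\psi^{-1}(y)=\rho^{-1}(y\,\mu^{-1}(y))$ for $y\in[0,\psi_{\max})$. $f_0^*(\alpha,d)=\frac{d\,(v_{\rm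 in}^*(\alpha,d)-\psi^{-1}(d))}{\mu^{-1}(d)}$ with $v_{\rm in}^*(\alpha,d)=\alpha\beta\gamma\big(s_{\rm in}-\varphi^{-1}(d/(1-\alpha))\big)$. *)

From Stdlib Require Import Reals.
Open Scope R_scope.

Record params := mkParams {
  s_in : R; gamma : R; beta : R; phi_max : R; k_s : R;
  rho_max : R; k_v : R; q_min : R; mu_max : R }.

Definition params_pos (p : params) : Prop :=
  0 < s_in p /\ 0 < gamma p /\ 0 < beta p /\ 0 < phi_max p /\ 0 < k_s p /\
  0 < rho_max p /\ 0 < k_v p /\ 0 < q_min p /\ 0 < mu_max p.

Definition phi (p : params) (s : R) : R := phi_max p * s / (k_s p + s).
Definition rho (p : params) (v : R) : R := rho_max p * v / (k_v p + v).
Definition mu (p : params) (q : R) : R := mu_max p * (1 - q_min p / q).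

(* Their inverses, in closed form:
   phi_inv : [0,phi_max) -> [0,oo), rho_inv : [0,rho_max) -> [0,oo),
   mu_inv : [0,mu_max) -> [q_min,oo). *)
Definition phi_inv (p : params) (y : R) : R := k_s p * y / (phi_max p - y).
Definition rho_inv (p : params) (y : R) : R := k_v p * y / (rho_max p - y).
Definition mu_inv (p : params) (y : R) : R := q_min p * mu_max p / (mu_max p - y).

Definition psi_max (p : params) : R :=
  mu_max p * rho_max p / (rho_max p + q_min p * mu_max p).

Definition psi_inv (p : params) (y : R) : R := rho_inv p (y * mu_inv p y).

Definition vin_star (p : params) (alpha d : R) : R :=
  alpha * beta p * gamma p * (s_in p - phi_inv p (d / (1 - alpha))).

Definition f0_star (p : params) (alpha d : R) : R :=
  d * (vin_star p alpha d - psi_inv p d) / mu_inv p d.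

Definition psi_alpha_inv (p : params) (alpha d : R) : R :=
  phi_inv p (d / (1 - alpha)) + psi_inv p d / (alpha * beta p * gamma p).

Definition D_alpha (p : params) (alpha d : R) : Prop :=
  0 < d < Rmin ((1 - alpha) * phi_max p) (psi_max p) /\ psi_alpha_inv p alpha d < s_in p.

(* On D_alpha both phi^{-1}(d/(1-alpha)) and psi^{-1}(d) are positive multiples of
   ratios d/(M-d), with poles at (1-alpha) phi_max and psi_max, so psi_alpha^{-1}
   is increasing and convex there, vanishes at 0 and blows up at the nearer pole;
   hence its sublevel set below s_in is an interval (0, c).  Since
   mu^{-1}(d) = q_min mu_max / (mu_max - d), on that interval
   f0*(alpha,d) = const * (s_in - psi_alpha^{-1}(d)) * d * (mu_max - d),
   a product of a concave, a linear and an affine positive factor, whose logarithm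
   is strictly concave because ln is. *)
From Stdlib Require Import Reals Lra Psatz.
Open Scope R_scope.

Lemma ln_le_compat x y : 0 < x -> x <= y -> ln x <= ln y.
Proof.
  intros hx [hlt | ->]; [left; apply ln_increasing |]; lra.
Qed.

Lemma ln_lt_sub_one w : 0 < w -> w <> 1 -> ln w < w - 1.
Proof.
  intros hw hne1.
  assert (hln : ln w <> 0) by (intro h0; apply hne1, ln_inv; rewrite ?ln_1; lra).
  pose proof (exp_ineq1 _ hln). rewrite exp_ln in * by exact hw. lra.
Qed.

Lemma ln_le_sub_one w : 0 < w -> ln w <= w - 1.
Proof.
  intros hw. destruct (Req_dec w 1) as [-> | hne1].
  - rewrite ln_1. lra.
  - left. now apply ln_lt_sub_one.
Qed.

Lemma ln_strict_concave u v t : 0 < u -> 0 < v -> u <> v -> 0 < t < 1 ->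
  t * ln u + (1 - t) * ln v < ln (t * u + (1 - t) * v).
Proof.
  intros hu hv huv ht.
  (* tangent line of ln at the mean z: ln w <= ln z + (w/z - 1), strictly at w = u *)
  set (z := t * u + (1 - t) * v).
  assert (hz : 0 < z) by (unfold z; nra).
  assert (hln_div : forall w, 0 < w -> ln w = ln z + ln (w / z)).
  { intros w hw. rewrite <- ln_mult by (try apply Rdiv_lt_0_compat; lra).
    f_equal. field. lra. }
  assert (huz : u / z <> 1).
  { intro h. apply huv.
    assert (u = u / z * z) by (field; lra). rewrite h in *. unfold z in *. nra. }
  pose proof (ln_lt_sub_one (u / z) ltac:(apply Rdiv_lt_0_compat; lra) huz).
  pose proof (ln_le_sub_one (v / z) ltac:(apply Rdiv_lt_0_compat; lra)).
  assert (hcomb : t * (u / z - 1) + (1 - t) * (v / z - 1) = 0)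
    by (unfold z in *; field; lra).
  rewrite (hln_div u hu), (hln_div v hv). nra.
Qed.

Lemma ln_concave_le u v w t : 0 < u -> 0 < v -> 0 < t < 1 ->
  t * u + (1 - t) * v <= w -> t * ln u + (1 - t) * ln v <= ln w.
Proof.
  intros hu hv ht hw.
  assert (hln_le := ln_le_compat (t * u + (1 - t) * v) w ltac:(nra) hw).
  destruct (Req_dec u v) as [<- | huv].
  - replace (t * u + (1 - t) * u) with u in hln_le by ring. nra.
  - pose proof (ln_strict_concave u v t hu hv huv ht). lra.
Qed.

Definition pole_ratio (M d : R) : R := d / (M - d).

Lemma pole_ratio_pos M d : 0 < d < M -> 0 < pole_ratio M d.
Proof. intros. apply Rdiv_lt_0_compat; lra. Qed.

Lemma pole_ratio_lt M x y : 0 < x -> x < y -> y < M ->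
  pole_ratio M x < pole_ratio M y.
Proof.
  intros hx hxy hyM. unfold pole_ratio.
  assert (E : y / (M - y) - x / (M - x) = M * (y - x) / ((M - x) * (M - y)))
    by (field; lra).
  assert (0 < M * (y - x) / ((M - x) * (M - y)))
    by (apply Rdiv_lt_0_compat; apply Rmult_lt_0_compat; lra).
  lra.
Qed.

Lemma pole_ratio_convex M x y t : 0 < x < M -> 0 < y < M -> 0 < t < 1 ->
  pole_ratio M (t * x + (1 - t) * y) <= t * pole_ratio M x + (1 - t) * pole_ratio M y.
Proof.
  intros hx hy ht. unfold pole_ratio.
  set (z := t * x + (1 - t) * y).
  assert (hz : 0 < M - z) by (unfold z; nra).
  assert (E : t * (x / (M - x)) + (1 - t) * (y / (M - y)) - z / (M - z)
             = M * t * (1 - t) * (x - y) ^ 2 / ((M - x) * (M - y) * (M - z)))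
    by (unfold z in *; field; lra).
  assert (0 <= M * t * (1 - t) * (x - y) ^ 2 / ((M - x) * (M - y) * (M - z))).
  { apply Rmult_le_pos.
    - assert (0 < M * t * (1 - t)) by (apply Rmult_lt_0_compat; nra).
      pose proof (pow2_ge_0 (x - y)). nra.
    - left. apply Rinv_0_lt_compat, Rmult_lt_0_compat; [apply Rmult_lt_0_compat |]; lra. }
  lra.
Qed.

Lemma pole_ratio_level M k s : 0 < M -> 0 < k -> 0 < s ->
  0 < s * M / (s + k) < M /\ k * pole_ratio M (s * M / (s + k)) = s.
Proof.
  intros hM hk hs. unfold pole_ratio. split; [split |].
  - apply Rdiv_lt_0_compat; nra.
  - apply (Rmult_lt_reg_r (s + k)); [lra |].
    unfold Rdiv. rewrite Rmult_assoc, Rinv_l by lra. nra.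
  - field. split; nra.
Qed.

Section PoleRatioSum.

Variables k1 M1 k2 M2 : R.
Hypotheses (hk1 : 0 < k1) (hM1 : 0 < M1) (hk2 : 0 < k2) (hM2 : 0 < M2).

Definition pole_ratio_sum (d : R) : R := k1 * pole_ratio M1 d + k2 * pole_ratio M2 d.

Local Notation m := (Rmin M1 M2).

Let m_le_M1 : m <= M1. Proof. apply Rmin_l. Qed.
Let m_le_M2 : m <= M2. Proof. apply Rmin_r. Qed.

Lemma pole_ratio_sum_lt x y : 0 < x -> x < y -> y < m ->
  pole_ratio_sum x < pole_ratio_sum y.
Proof.
  intros hx hxy hy. unfold pole_ratio_sum.
  pose proof (pole_ratio_lt M1 x y hx hxy ltac:(lra)).
  pose proof (pole_ratio_lt M2 x y hx hxy ltac:(lra)).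
  nra.
Qed.

Lemma pole_ratio_sum_convex x y t : 0 < x < m -> 0 < y < m -> 0 < t < 1 ->
  pole_ratio_sum (t * x + (1 - t) * y) <= t * pole_ratio_sum x + (1 - t) * pole_ratio_sum y.
Proof.
  intros hx hy ht. unfold pole_ratio_sum.
  pose proof (pole_ratio_convex M1 x y t ltac:(lra) ltac:(lra) ht).
  pose proof (pole_ratio_convex M2 x y t ltac:(lra) ltac:(lra) ht).
  nra.
Qed.

Lemma pole_ratio_sum_exceeds s : 0 < s -> exists d, 0 < d < m /\ s < pole_ratio_sum d.
Proof.
  intros hs. unfold pole_ratio_sum.
  destruct (Rle_dec M1 M2) as [h12 | h21].
  - rewrite Rmin_left by exact h12.
    destruct (pole_ratio_level M1 k1 s hM1 hk1 hs) as [hd hlev].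
    exists (s * M1 / (s + k1)). split; [exact hd |].
    pose proof (pole_ratio_pos M2 (s * M1 / (s + k1)) ltac:(lra)). nra.
  - rewrite Rmin_right by lra.
    destruct (pole_ratio_level M2 k2 s hM2 hk2 hs) as [hd hlev].
    exists (s * M2 / (s + k2)). split; [exact hd |].
    pose proof (pole_ratio_pos M1 (s * M2 / (s + k2)) ltac:(lra)). nra.
Qed.

Lemma pole_ratio_sum_level s : 0 < s -> exists c, 0 < c < m /\ pole_ratio_sum c = s.
Proof.
  intros hs.
  (* [pole_ratio_sum - s] with its denominators cleared, which is continuous on all of R *)
  set (q := fun d => k1 * d * (M2 - d) + k2 * d * (M1 - d) - s * (M1 - d) * (M2 - d)).
  assert (hq : forall d, 0 < d < m -> q d = (M1 - d) * (M2 - d) * (pole_ratio_sum d - s)).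
  { intros d hd. unfold q, pole_ratio_sum, pole_ratio. field. split; lra. }
  destruct (pole_ratio_sum_exceeds s hs) as [d1 [hd1 hsd1]].
  assert (hq0 : q 0 < 0).
  { unfold q. assert (0 < s * M1 * M2) by (apply Rmult_lt_0_compat; nra). nra. }
  assert (hqd1 : 0 < q d1).
  { rewrite hq by exact hd1.
    apply Rmult_lt_0_compat; [apply Rmult_lt_0_compat |]; lra. }
  destruct (IVT q 0 d1 ltac:(unfold q; reg) ltac:(lra) hq0 hqd1) as [c [hc hqc]].
  assert (c <> 0) by (intros ->; lra).
  assert (c <> d1) by (intros ->; lra).
  exists c. split; [lra |].
  rewrite hq in hqc by lra.
  assert (0 < (M1 - c) * (M2 - c)) by (apply Rmult_lt_0_compat; lra).
  destruct (Rmult_integral _ _ hqc); lra.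
Qed.

Lemma pole_ratio_sum_sublevel s c : 0 < c < m -> pole_ratio_sum c = s ->
  forall d, (0 < d < m /\ pole_ratio_sum d < s) <-> 0 < d < c.
Proof.
  intros hc hsc d. split.
  - intros [hd hds]. split; [lra |].
    destruct (Rlt_le_dec d c) as [| [hcd | <-]]; [assumption | |]; [| lra].
    pose proof (pole_ratio_sum_lt c d ltac:(lra) hcd ltac:(lra)). lra.
  - intros hd. split; [lra |]. rewrite <- hsc. apply pole_ratio_sum_lt; lra.
Qed.

End PoleRatioSum.

Lemma f0_star_eq p alpha d : alpha * beta p * gamma p <> 0 ->
  f0_star p alpha d =
    (s_in p - psi_alpha_inv p alpha d) * (alpha * beta p * gamma p * d) / mu_inv p d.
Proof.
  intros ha. unfold f0_star. apply (f_equal (fun z => z / mu_inv p d)).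
  unfold vin_star, psi_alpha_inv. field.
  repeat split; intros h0; apply ha; rewrite h0; ring.
Qed.

Definition psi_inv_gain (p : params) : R :=
  k_v p * q_min p * mu_max p / (rho_max p + q_min p * mu_max p).

Section Model.

Variables (p : params) (alpha : R).
Hypotheses (Hp : params_pos p) (Ha : 0 < alpha < 1).

Local Notation A := (1 - alpha).
Local Notation a := (alpha * beta p * gamma p).
Local Notation m := (Rmin (A * phi_max p) (psi_max p)).
Local Notation g :=
  (pole_ratio_sum (k_s p) (A * phi_max p) (psi_inv_gain p / a) (psi_max p)).

Let s_in_pos : 0 < s_in p. Proof. apply Hp. Qed.
Let phi_max_pos : 0 < phi_max p. Proof. apply Hp. Qed.
Let k_s_pos : 0 < k_s p. Proof. apply Hp. Qed.
Let rho_max_pos : 0 < rho_max p. Proof. apply Hp. Qed.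
Let k_v_pos : 0 < k_v p. Proof. apply Hp. Qed.
Let q_min_pos : 0 < q_min p. Proof. apply Hp. Qed.
Let mu_max_pos : 0 < mu_max p. Proof. apply Hp. Qed.
Let gamma_pos : 0 < gamma p. Proof. apply Hp. Qed.
Let beta_pos : 0 < beta p. Proof. apply Hp. Qed.

Lemma alpha_beta_gamma_pos : 0 < a.
Proof. apply Rmult_lt_0_compat; [apply Rmult_lt_0_compat |]; lra. Qed.

Let a_pos := alpha_beta_gamma_pos.

Lemma psi_max_pos : 0 < psi_max p.
Proof. apply Rdiv_lt_0_compat; nra. Qed.

Lemma psi_max_lt_mu_max : psi_max p < mu_max p.
Proof.
  unfold psi_max. apply (Rmult_lt_reg_r (rho_max p + q_min p * mu_max p)); [nra |].
  unfold Rdiv. rewrite Rmult_assoc, Rinv_l by nra.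
  assert (0 < mu_max p * (q_min p * mu_max p)) by (apply Rmult_lt_0_compat; nra).
  nra.
Qed.

Lemma psi_inv_gain_pos : 0 < psi_inv_gain p / a.
Proof.
  unfold psi_inv_gain. apply Rdiv_lt_0_compat; [apply Rdiv_lt_0_compat |]; try nra.
  apply Rmult_lt_0_compat; nra.
Qed.

Lemma psi_inv_pole_ratio d : 0 <= d < psi_max p ->
  psi_inv p d = psi_inv_gain p * pole_ratio (psi_max p) d.
Proof.
  intros hd. unfold psi_inv, rho_inv, mu_inv, psi_inv_gain, pole_ratio, psi_max.
  assert (d * (rho_max p + q_min p * mu_max p) < mu_max p * rho_max p).
  { apply (Rmult_lt_reg_r (/ (rho_max p + q_min p * mu_max p))).
    - apply Rinv_0_lt_compat. nra.
    - rewrite Rmult_assoc, Rinv_r by nra. unfold psi_max in hd. lra. }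
  field. repeat split; nra.
Qed.

Lemma psi_alpha_inv_pole_ratio_sum d : 0 < d < m -> psi_alpha_inv p alpha d = g d.
Proof.
  intros hd.
  assert (d < A * phi_max p) by (pose proof (Rmin_l (A * phi_max p) (psi_max p)); lra).
  assert (d < psi_max p) by (pose proof (Rmin_r (A * phi_max p) (psi_max p)); lra).
  unfold psi_alpha_inv, pole_ratio_sum. rewrite psi_inv_pole_ratio by lra.
  unfold phi_inv, pole_ratio. field. repeat split; lra.
Qed.

Lemma D_alpha_iff d : D_alpha p alpha d <-> 0 < d < m /\ g d < s_in p.
Proof.
  unfold D_alpha. split; intros [hd hlev]; split; try exact hd.
  - now rewrite <- psi_alpha_inv_pole_ratio_sum.
  - now rewrite psi_alpha_inv_pole_ratio_sum.
Qed.

Lemma D_alpha_interval : exists c, 0 < c < m /\ psi_alpha_inv p alpha c = s_in p /\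
  (forall d, D_alpha p alpha d <-> 0 < d < c).
Proof.
  assert (hA : 0 < A * phi_max p) by nra.
  destruct (pole_ratio_sum_level _ _ _ _ k_s_pos hA psi_inv_gain_pos psi_max_pos _ s_in_pos)
    as [c [hc hgc]].
  exists c. split; [exact hc |]. split; [now rewrite psi_alpha_inv_pole_ratio_sum |].
  intros d. rewrite D_alpha_iff.
  exact (pole_ratio_sum_sublevel _ _ _ _ k_s_pos psi_inv_gain_pos _ _ hc hgc d).
Qed.

Lemma f0_star_pos d : D_alpha p alpha d -> 0 < f0_star p alpha d.
Proof.
  intros [hd hlev]. rewrite f0_star_eq by lra.
  pose proof (Rmin_r (A * phi_max p) (psi_max p)). pose proof psi_max_lt_mu_max.
  apply Rdiv_lt_0_compat.
  - apply Rmult_lt_0_compat; [lra |]. apply Rmult_lt_0_compat; lra.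
  - unfold mu_inv. apply Rdiv_lt_0_compat; [apply Rmult_lt_0_compat |]; lra.
Qed.

Lemma ln_f0_star d : D_alpha p alpha d ->
  ln (f0_star p alpha d) =
    ln (a / (q_min p * mu_max p)) + ln (s_in p - g d) + ln d + ln (mu_max p - d).
Proof.
  intros hD. pose proof hD as [hd hlev]. apply D_alpha_iff in hD as [_ hg].
  pose proof (Rmin_r (A * phi_max p) (psi_max p)). pose proof psi_max_lt_mu_max.
  rewrite f0_star_eq, psi_alpha_inv_pole_ratio_sum by lra.
  replace ((s_in p - g d) * (a * d) / mu_inv p d)
    with (a / (q_min p * mu_max p) * (s_in p - g d) * d * (mu_max p - d))
    by (unfold mu_inv; field; nra).
  assert (0 < a / (q_min p * mu_max p))
    by (apply Rdiv_lt_0_compat; [| apply Rmult_lt_0_compat]; lra).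
  assert (0 < s_in p - g d) by lra. assert (0 < mu_max p - d) by lra.
  assert (0 < d) by lra.
  rewrite !ln_mult; try reflexivity; repeat first [assumption | apply Rmult_lt_0_compat].
Qed.

Lemma f0_star_strict_log_concave x y t :
  D_alpha p alpha x -> D_alpha p alpha y -> x <> y -> 0 < t < 1 ->
  t * ln (f0_star p alpha x) + (1 - t) * ln (f0_star p alpha y)
    < ln (f0_star p alpha (t * x + (1 - t) * y)).
Proof.
  intros hDx hDy hxy ht.
  set (z := t * x + (1 - t) * y).
  pose proof hDx as [hx hgx]%D_alpha_iff. pose proof hDy as [hy hgy]%D_alpha_iff.
  pose proof (Rmin_r (A * phi_max p) (psi_max p)). pose proof psi_max_lt_mu_max.
  assert (hz : 0 < z < m) by (unfold z; nra).
  assert (hgz : g z <= t * g x + (1 - t) * g y)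
    by exact (pole_ratio_sum_convex _ _ _ _ k_s_pos psi_inv_gain_pos x y t hx hy ht).
  assert (hDz : D_alpha p alpha z) by (apply D_alpha_iff; split; [exact hz | nra]).
  rewrite (ln_f0_star x hDx), (ln_f0_star y hDy), (ln_f0_star z hDz).
  pose proof (ln_concave_le (s_in p - g x) (s_in p - g y) (s_in p - g z) t
                ltac:(lra) ltac:(lra) ht ltac:(nra)).
  pose proof (ln_strict_concave x y t ltac:(lra) ltac:(lra) hxy ht) as hln_z.
  fold z in hln_z.
  pose proof (ln_concave_le (mu_max p - x) (mu_max p - y) (mu_max p - z) t
                ltac:(lra) ltac:(lra) ht ltac:(unfold z; lra)).
  lra.
Qed.

End Model.

Theorem lemma2 (p : params) (Hp : params_pos p) (alpha : R) (Ha : 0 < alpha < 1) :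
  (exists c : R,
      0 < c < Rmin ((1 - alpha) * phi_max p) (psi_max p) /\
      psi_alpha_inv p alpha c = s_in p /\
      (forall d, D_alpha p alpha d <-> 0 < d < c)) /\
  (forall d, D_alpha p alpha d ->
      f0_star p alpha d =
        (s_in p - psi_alpha_inv p alpha d) * (alpha * beta p * gamma p * d) / mu_inv p d /\
      0 < f0_star p alpha d) /\
  (forall x y t, D_alpha p alpha x -> D_alpha p alpha y -> x <> y -> 0 < t < 1 ->
      t * ln (f0_star p alpha x) + (1 - t) * ln (f0_star p alpha y)
        < ln (f0_star p alpha (t * x + (1 - t) * y))).
Proof.
  split; [| split].
  - exact (D_alpha_interval p alpha Hp Ha).
  - intros d hD. split; [| exact (f0_star_pos p alpha Hp Ha d hD)].
    apply f0_star_eq, Rgt_not_eq, (alpha_beta_gamma_pos p alpha Hp Ha).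
  - exact (f0_star_strict_log_concave p alpha Hp Ha).
Qed.
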